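(* Let $G\in\mathrm{C}^1(\mathbb{R})$ be coercive and let $V\in\mathrm{Lip}(\mathbb{R})$ be $1$-periodic. For each $\theta\in\mathbb{R}$ there exist a unique $\overline{H}(\theta)\in\mathbb{R}$ and a unique $1$-periodic $f_\theta\in\mathrm{C}^1(\mathbb{R})$ such that $\int_0^1 f_\theta(x)\,dx=\theta$ and $$f_\theta'(x)+G(f_\theta(x))+V(x)=\overline{H}(\theta)\quad\text{for all }x\in\mathbb{R}.$$
   Context: $G$ coercive means $G(p)\to\infty$ as $p\to\pm\infty$. *)

From Stdlib Require Import Reals.
From Coquelicot Require Import Coquelicot.
Open Scope R_scope.

Definition is_C1 (f : R -> R) : Prop :=
  (forall x, ex_derive f x) /\ (forall x, continuous (Derive f) x).

Definition coercive (G : R -> R) : Prop :=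
  filterlim G (Rbar_locally p_infty) (Rbar_locally p_infty) /\
  filterlim G (Rbar_locally m_infty) (Rbar_locally p_infty).

Definition lipschitz (V : R -> R) : Prop :=
  exists L : R, forall x y, Rabs (V x - V y) <= L * Rabs (x - y).

Definition periodic1 (f : R -> R) : Prop := forall x, f (x + 1) = f x.

Definition cell_solution (G V : R -> R) (theta H : R) (f : R -> R) : Prop :=
  is_C1 f /\ periodic1 f /\ RInt f 0 1 = theta /\
  (forall x, Derive f x + G (f x) + V x = H).

(* Two periodic solutions that touch coincide: at a common point (f1 - f2)' = H1 - H2, so
   if H1 > H2 the difference becomes positive and stays so, which periodicity forbids; once
   H1 = H2, Gronwall's inequality (G is locally Lipschitz) gives f1 = f2. Solutions that do
   not touch are strictly ordered, so their means differ: this is uniqueness.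
   Existence is by shooting. With G replaced by G (clamp M _) the equation is globally
   Lipschitz, and Picard iteration gives a global solution f(H, a) with f(H, a)(0) = a. Its
   value at 1 is continuous and strictly increasing in H, so there is a unique H(a) with
   f(H(a), a)(1) = a, and H(a) depends continuously on a. Then f(H(a), a) is 1-periodic and,
   by coercivity, stays in [-M, M], so it solves the original equation. Coercivity also puts
   periodic solutions starting high (low) above (below) theta everywhere, and the
   intermediate value theorem applied to the mean of f(H(a), a) yields mean theta. *)

From Stdlib Require Import Reals Lra Lia Psatz ClassicalEpsilon FunctionalExtensionality.
From Coquelicot Require Import Coquelicot.
Open Scope R_scope.

Lemma continuous_epsilon_delta (f : R -> R) x :
  continuous f x <->
  forall eps, 0 < eps -> exists del, 0 < del /\
    forall z, Rabs (z - x) < del -> Rabs (f z - f x) < eps.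
Proof.
assert (E : continuity_pt f x <-> forall eps, 0 < eps -> exists del, 0 < del /\
    forall z, Rabs (z - x) < del -> Rabs (f z - f x) < eps).
{ unfold continuity_pt, continue_in, limit1_in, limit_in, D_x, no_cond; simpl; unfold R_dist.
  split; intros H eps Heps; destruct (H eps Heps) as [del [Hdel Hz]];
    exists del; split; auto.
  - intros z Hzx. destruct (Req_dec z x) as [->|Hne].
    + rewrite Rminus_diag, Rabs_R0; exact Heps.
    + apply Hz; auto.
  - intros z [_ Hzx]. apply Hz, Hzx. }
rewrite <- E. split; apply continuity_pt_filterlim.
Qed.

Lemma lipschitz_continuous (g : R -> R) L :
  (forall y z, Rabs (g y - g z) <= L * Rabs (y - z)) -> forall y, continuous g y.
Proof.
intros Hg y. apply continuous_epsilon_delta. intros eps Heps.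
assert (HL : 0 <= Rabs L) by apply Rabs_pos.
exists (eps / (Rabs L + 1)). split; [apply Rdiv_lt_0_compat; lra|].
intros z Hz. eapply Rle_lt_trans; [apply Hg|].
apply Rle_lt_trans with (Rabs L * Rabs (z - y)).
{ apply Rmult_le_compat_r; [apply Rabs_pos | apply Rle_abs]. }
assert (Hfrac : Rabs L * (eps / (Rabs L + 1)) < eps).
{ apply (Rmult_lt_reg_r (Rabs L + 1)); [lra|].
  replace (Rabs L * (eps / (Rabs L + 1)) * (Rabs L + 1)) with (Rabs L * eps) by (field; lra).
  nra. }
assert (Rabs L * Rabs (z - y) <= Rabs L * (eps / (Rabs L + 1)))
  by (apply Rmult_le_compat_l; lra).
lra.
Qed.

Lemma lt_of_never_eq (f1 f2 : R -> R) :
  (forall x, continuous f1 x) -> (forall x, continuous f2 x) ->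
  (forall x, f1 x <> f2 x) -> f1 0 < f2 0 -> forall x, f1 x < f2 x.
Proof.
intros C1 C2 Hne H0 x.
destruct (Rlt_or_le (f1 x) (f2 x)) as [|Hle]; [assumption | exfalso].
destruct (IVT_gen_consistent (fun t => f2 t - f1 t) 0 x 0) as [z [_ Hz]].
- intro t. apply (continuous_minus f2 f1); auto.
- unfold Rmin, Rmax. destruct Rle_dec; lra.
- apply (Hne z). lra.
Qed.

Definition locally_lipschitz (G : R -> R) : Prop :=
  forall r, exists LG, 0 <= LG /\
    forall p q, Rabs p <= r -> Rabs q <= r -> Rabs (G p - G q) <= LG * Rabs (p - q).

Lemma C1_locally_lipschitz G : is_C1 G -> locally_lipschitz G.
Proof.
intros [Hd Hc] r.
destruct (continuity_ab_maj (fun t => Rabs (Derive G t)) (- Rabs r) (Rabs r))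
  as [c [Hmax _]]; [pose proof (Rabs_pos r); lra | |].
{ intros t _. apply continuity_pt_filterlim, (continuous_comp (Derive G) Rabs);
    [apply Hc | apply continuous_Rabs]. }
exists (Rabs (Derive G c)). split; [apply Rabs_pos|]. intros p q Hp Hq.
destruct (MVT_gen G q p (Derive G)) as [d [Hd1 Heq]].
- intros x _. apply Derive_correct, Hd.
- intros x _. apply continuity_pt_filterlim, (ex_derive_continuous G), Hd.
- rewrite Heq, Rabs_mult. apply Rmult_le_compat_r; [apply Rabs_pos|].
  apply Hmax. pose proof (Rle_abs r).
  apply Rabs_le_between in Hp. apply Rabs_le_between in Hq.
  unfold Rmin, Rmax in Hd1. destruct Rle_dec; lra.
Qed.

Lemma locally_lipschitz_continuous G : locally_lipschitz G -> forall p, continuous G p.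
Proof.
intros HG p. destruct (HG (Rabs p + 1)) as [LG [HLG HLip]].
apply continuous_epsilon_delta. intros eps Heps.
exists (Rmin 1 (eps / (LG + 1))). split; [apply Rmin_glb_lt; [lra | apply Rdiv_lt_0_compat; lra]|].
intros z Hz.
assert (Hz1 : Rabs (z - p) < 1) by (eapply Rlt_le_trans; [apply Hz | apply Rmin_l]).
assert (Hz2 : Rabs (z - p) < eps / (LG + 1)) by (eapply Rlt_le_trans; [apply Hz | apply Rmin_r]).
assert (Habs : Rabs z <= Rabs p + 1)
  by (replace z with (p + (z - p)) by ring; pose proof (Rabs_triang p (z - p)); lra).
eapply Rle_lt_trans; [apply HLip; [exact Habs | pose proof (Rabs_pos p); lra]|].
apply Rle_lt_trans with ((LG + 1) * Rabs (z - p)); [pose proof (Rabs_pos (z - p)); nra|].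
apply (Rmult_lt_compat_l (LG + 1)) in Hz2; [|lra].
replace ((LG + 1) * (eps / (LG + 1))) with eps in Hz2 by (field; lra). exact Hz2.
Qed.

Lemma continuous_monotone_root (Phi : R -> R -> R) (h : R -> R) a r : 0 < r ->
  (forall b, Rabs (b - a) < r -> Phi (h b) b = 0) ->
  (forall b H H', Rabs (b - a) < r -> H < H' -> Phi H b < Phi H' b) ->
  (forall H, continuous (Phi H) a) ->
  continuous h a.
Proof.
intros Hr Hroot Hmono Hcont. apply continuous_epsilon_delta. intros eps Heps.
assert (Hmono' : forall b H H', Rabs (b - a) < r -> H <= H' -> Phi H b <= Phi H' b)
  by (intros b H H' Hb [Hlt | ->]; [left; apply Hmono | right]; auto).
assert (Ha : Rabs (a - a) < r) by (rewrite Rminus_diag, Rabs_R0; exact Hr).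
assert (Hup : 0 < Phi (h a + eps) a) by (rewrite <- (Hroot a Ha); apply Hmono; [exact Ha | lra]).
assert (Hdn : 0 < - Phi (h a - eps) a)
  by (assert (Phi (h a - eps) a < Phi (h a) a) by (apply Hmono; [exact Ha | lra]);
      rewrite (Hroot a Ha) in *; lra).
destruct (proj1 (continuous_epsilon_delta _ a) (Hcont (h a + eps)) _ Hup) as [d1 [Hd1 H1]].
destruct (proj1 (continuous_epsilon_delta _ a) (Hcont (h a - eps)) _ Hdn) as [d2 [Hd2 H2]].
exists (Rmin r (Rmin d1 d2)). split; [repeat apply Rmin_glb_lt; lra|]. intros b Hb.
assert (Hbr : Rabs (b - a) < r) by (eapply Rlt_le_trans; [apply Hb | apply Rmin_l]).
assert (Hbd : Rabs (b - a) < Rmin d1 d2) by (eapply Rlt_le_trans; [apply Hb | apply Rmin_r]).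
specialize (H1 b (Rlt_le_trans _ _ _ Hbd (Rmin_l _ _))). apply Rabs_def2 in H1.
specialize (H2 b (Rlt_le_trans _ _ _ Hbd (Rmin_r _ _))). apply Rabs_def2 in H2.
specialize (Hroot b Hbr). apply Rabs_def1.
- destruct (Rlt_or_le (h b - h a) eps) as [|Hge]; [assumption|].
  specialize (Hmono' b (h a + eps) (h b) Hbr ltac:(lra)). lra.
- destruct (Rlt_or_le (- eps) (h b - h a)) as [|Hle]; [assumption|].
  specialize (Hmono' b (h b) (h a - eps) Hbr ltac:(lra)). lra.
Qed.

Lemma RInt_param_continuous (u : R -> R -> R) a :
  (forall b x, continuous (u b) x) ->
  (forall eps, 0 < eps -> exists del, 0 < del /\
     forall b x, Rabs (b - a) < del -> 0 <= x <= 1 -> Rabs (u b x - u a x) < eps) ->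
  continuous (fun b => RInt (u b) 0 1) a.
Proof.
intros Hc Hu. apply continuous_epsilon_delta. intros eps Heps.
destruct (Hu (eps / 2) ltac:(lra)) as [del [Hdel Hb]].
exists del. split; [exact Hdel|]. intros b Hba.
assert (Ex : forall c, ex_RInt (u c) 0 1)
  by (intro c; apply (ex_RInt_continuous (V := R_CompleteNormedModule)); intros; apply Hc).
change (RInt (u b) 0 1 - RInt (u a) 0 1) with (minus (RInt (u b) 0 1) (RInt (u a) 0 1)).
rewrite <- (RInt_minus (V := R_CompleteNormedModule)) by apply Ex.
eapply Rle_lt_trans; [apply (abs_RInt_le_const _ 0 1 (eps / 2)); [lra | |] | lra].
- apply (ex_RInt_minus (V := R_CompleteNormedModule)); apply Ex.
- intros x Hx. left. apply Hb; assumption.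
Qed.

Lemma RInt_unit_gt (f : R -> R) c :
  (forall x, continuous f x) -> (forall x, c < f x) -> c < RInt f 0 1.
Proof.
intros Hf Hc.
replace c with (RInt (fun _ => c) 0 1) at 1
  by (rewrite RInt_const; unfold scal; simpl; unfold mult; simpl; ring).
apply RInt_lt; [lra | intros; apply Hf | intros; apply continuous_const | intros; apply Hc].
Qed.

Lemma RInt_unit_lt (f : R -> R) c :
  (forall x, continuous f x) -> (forall x, f x < c) -> RInt f 0 1 < c.
Proof.
intros Hf Hc.
replace c with (RInt (fun _ => c) 0 1)
  by (rewrite RInt_const; unfold scal; simpl; unfold mult; simpl; ring).
apply RInt_lt; [lra | intros; apply continuous_const | intros; apply Hf | intros; apply Hc].
Qed.

(** * Comparison principles and Gronwall's inequality *)

Lemma derive_pos_increasing_near f x l : is_derive f x l -> 0 < l ->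
  exists d, 0 < d /\ (forall y, x < y < x + d -> f x < f y) /\
                     (forall y, x - d < y < x -> f y < f x).
Proof.
intros Hd Hl. apply is_derive_Reals in Hd.
destruct (Hd l Hl) as [[d dpos] Hdd]; simpl in Hdd.
assert (Hslope : forall y, 0 < Rabs (y - x) < d -> 0 < (f y - f x) / (y - x)).
{ intros y Hy. assert (Hne : y - x <> 0) by (intro E; rewrite E, Rabs_R0 in Hy; lra).
  specialize (Hdd (y - x) Hne ltac:(lra)).
  replace (x + (y - x)) with y in Hdd by ring.
  apply Rabs_def2 in Hdd; lra. }
exists d; split; [exact dpos|split]; intros y Hy.
- assert (H := Hslope y). rewrite Rabs_pos_eq in H by lra. specialize (H ltac:(lra)).
  apply Rdiv_pos_cases in H. lra.
- assert (H := Hslope y). rewrite Rabs_left in H by lra. specialize (H ltac:(lra)).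
  apply Rdiv_pos_cases in H. lra.
Qed.

Lemma derive_eq0_at_max f c l : (forall x, f x <= f c) -> is_derive f c l -> l = 0.
Proof.
intros Hmax Hd. apply is_derive_Reals in Hd.
change l with (derive_pt f c (exist _ l Hd)).
apply (deriv_maximum f (c - 1) (c + 1)); [lra | lra | intros; apply Hmax].
Qed.

Lemma first_zero (d : R -> R) a b :
  (forall x, continuous d x) -> a < b -> 0 < d a -> d b <= 0 ->
  exists s, a < s <= b /\ d s = 0 /\ forall z, a <= z < s -> 0 < d z.
Proof.
intros Hc Hab Ha Hb.
set (E := fun y => a <= y <= b /\ forall z, a <= z <= y -> 0 < d z).
assert (HaE : E a) by (split; [lra | intros z Hz; replace z with a by lra; exact Ha]).
destruct (completeness E) as [s [Hub Hlub]].
{ exists b; intros y [Hy _]; lra. }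
{ exists a; exact HaE. }
assert (Has : a <= s) by (apply Hub, HaE).
assert (Hsb : s <= b) by (apply Hlub; intros y [Hy _]; lra).
assert (Hbefore : forall z, a <= z < s -> 0 < d z).
{ intros z Hz. destruct (Rle_or_lt (d z) 0) as [Hdz|]; [exfalso | assumption].
  assert (Hzub : is_upper_bound E z).
  { intros y [Hy1 Hy2]. destruct (Rle_or_lt y z) as [|Hzy]; [assumption|].
    specialize (Hy2 z ltac:(lra)). lra. }
  specialize (Hlub z Hzub). lra. }
destruct (Req_dec (d s) 0) as [Hs0|Hs0].
{ exists s. split; [|split; assumption].
  split; [destruct Has as [|E0]; [assumption | subst s; lra] | exact Hsb]. }
exfalso.
destruct (proj1 (continuous_epsilon_delta d s) (Hc s) (Rabs (d s)) (Rabs_pos_lt _ Hs0))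
  as [del [Hdel Hnear]].
assert (Hsign : forall z, Rabs (z - s) < del -> 0 < d z * d s).
{ intros z Hz. specialize (Hnear z Hz). apply Rabs_def2 in Hnear.
  destruct (Rle_or_lt 0 (d s)); [rewrite Rabs_pos_eq in Hnear | rewrite Rabs_left in Hnear];
    nra. }
destruct (Rlt_or_le (d s) 0) as [Hneg|Hpos].
- assert (Has' : a < s) by (destruct Has as [|E0]; [assumption | subst s; lra]).
  set (z := Rmax a (s - del / 2)).
  assert (Hz : a <= z < s /\ s - del < z) by (unfold z, Rmax; destruct Rle_dec; lra).
  specialize (Hbefore z ltac:(lra)).
  specialize (Hsign z ltac:(rewrite Rabs_left; lra)). nra.
- assert (Hsb' : s < b) by (destruct Hsb as [|E0]; [assumption | subst s; lra]).
  set (y := Rmin b (s + del / 2)).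
  assert (Hy : s < y <= b /\ y < s + del) by (unfold y, Rmin; destruct Rle_dec; lra).
  assert (HyE : E y).
  { split; [lra|]. intros z Hz. destruct (Rlt_or_le z s); [apply Hbefore; lra|].
    specialize (Hsign z ltac:(rewrite Rabs_pos_eq; lra)). nra. }
  specialize (Hub y HyE). lra.
Qed.

Lemma pos_right_of_zero (d D : R -> R) x0 :
  (forall x, is_derive d x (D x)) -> (forall x, d x = 0 -> 0 < D x) ->
  d x0 = 0 -> forall x, x0 < x -> 0 < d x.
Proof.
intros Hd HD H0 x1 Hx1.
destruct (Rlt_or_le 0 (d x1)) as [|Hle]; [assumption | exfalso].
assert (Hc : forall x, continuous d x)
  by (intro x; apply (ex_derive_continuous d); exists (D x); apply Hd).
destruct (derive_pos_increasing_near _ _ _ (Hd x0) (HD x0 H0)) as [del [Hdel [Hr _]]].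
set (x2 := x0 + Rmin del (x1 - x0) / 2).
assert (Hx2 : x0 < x2 < x1 /\ x2 < x0 + del) by (unfold x2, Rmin; destruct Rle_dec; lra).
assert (Hd2 : 0 < d x2) by (rewrite <- H0; apply Hr; lra).
destruct (first_zero d x2 x1 Hc ltac:(lra) Hd2 Hle) as [s [Hs [Hds Hbefore]]].
destruct (derive_pos_increasing_near _ _ _ (Hd s) (HD s Hds)) as [del' [Hdel' [_ Hl]]].
set (z := Rmax x2 (s - del' / 2)).
assert (x2 <= z < s /\ s - del' < z) by (unfold z, Rmax; destruct Rle_dec; lra).
specialize (Hbefore z ltac:(lra)). specialize (Hl z ltac:(lra)). lra.
Qed.

Lemma le_of_derive_nonpos (w Dw : R -> R) a b : a <= b ->
  (forall x, is_derive w x (Dw x)) -> (forall x, a <= x <= b -> Dw x <= 0) -> w b <= w a.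
Proof.
intros Hab Hd Hn.
destruct (MVT_gen w a b Dw) as [c [Hc Heq]].
- intros x _; apply Hd.
- intros x _. apply continuity_pt_filterlim, (ex_derive_continuous w).
  exists (Dw x); apply Hd.
- rewrite Rmin_left, Rmax_right in Hc by lra.
  specialize (Hn c Hc). assert (Dw c * (b - a) <= 0) by (apply Rmult_le_0_r; lra). lra.
Qed.

Lemma Rabs_sub_le_of_derive (h Dh g Dg : R -> R) a b : a <= b ->
  (forall x, is_derive h x (Dh x)) -> (forall x, is_derive g x (Dg x)) ->
  (forall x, a <= x <= b -> Rabs (Dh x) <= Dg x) -> Rabs (h b - h a) <= g b - g a.
Proof.
intros Hab Hh Hg Hbound.
assert (Hup : forall s, -1 <= s <= 1 -> s * h b - g b <= s * h a - g a).
{ intros s Hs.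
  apply (le_of_derive_nonpos (fun x => s * h x - g x) (fun x => s * Dh x - Dg x) a b Hab).
  - intro x. apply (is_derive_minus (fun x => s * h x) g).
    + apply (is_derive_scal h x s (Dh x)), Hh.
    + apply Hg.
  - intros x Hx. specialize (Hbound x Hx).
    assert (s * Dh x <= Rabs (Dh x)).
    { destruct (Rle_or_lt 0 (Dh x)).
      - rewrite Rabs_pos_eq by lra. nra.
      - rewrite Rabs_left by lra. nra. }
    lra. }
apply Rabs_le. pose proof (Hup 1 ltac:(lra)). pose proof (Hup (-1) ltac:(lra)). lra.
Qed.

Lemma exp_le_mono x y : x <= y -> exp x <= exp y.
Proof. intros [H | ->]; [left; apply exp_increasing, H | right; reflexivity]. Qed.

Lemma Rabs_le_exp_of_derive (h Dh : R -> R) K c : 0 <= c -> h 0 = 0 ->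
  (forall x, is_derive h x (Dh x)) ->
  (forall x, Rabs (Dh x) <= K * c * exp (c * Rabs x)) ->
  forall x, Rabs (h x) <= K * (exp (c * Rabs x) - 1).
Proof.
intros Hc H0 Hd Hb x.
destruct (Rle_or_lt 0 x) as [Hx|Hx].
- assert (Hcmp := Rabs_sub_le_of_derive h Dh (fun t => K * exp (c * t))
    (fun t => K * (c * exp (c * t))) 0 x Hx Hd).
  rewrite H0, Rminus_0_r, Rmult_0_r, exp_0 in Hcmp. rewrite (Rabs_pos_eq x Hx).
  replace (K * (exp (c * x) - 1)) with (K * exp (c * x) - K * 1) by ring.
  apply Hcmp.
  + intro t. auto_derive; [exact I | ring].
  + intros t Ht. specialize (Hb t). rewrite (Rabs_pos_eq t) in Hb by lra. lra.
- assert (Hcmp := Rabs_sub_le_of_derive h Dh (fun t => - K * exp (- c * t))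
    (fun t => K * (c * exp (- c * t))) x 0 ltac:(lra) Hd).
  cbv beta in Hcmp. rewrite H0, Rmult_0_r, exp_0, Rminus_0_l, Rabs_Ropp in Hcmp.
  rewrite (Rabs_left x Hx).
  replace (K * (exp (c * - x) - 1)) with (- K * 1 - - K * exp (- c * x))
    by (replace (c * - x) with (- c * x) by ring; ring).
  apply Hcmp.
  + intro t. auto_derive; [exact I | ring].
  + intros t Ht. specialize (Hb t). rewrite (Rabs_left1 t) in Hb by lra.
    replace (- c * t) with (c * - t) by ring. lra.
Qed.

Lemma sq_derive_le d e L eps : 0 <= L -> 0 <= eps <= 1 ->
  Rabs e <= L * Rabs d + eps -> 2 * d * e <= (2 * L + 1) * (d ^ 2 + eps).
Proof.
intros HL Heps He.
assert (Hde : d * e <= Rabs d * Rabs e) by (rewrite <- Rabs_mult; apply Rle_abs).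
assert (Hd2 : Rabs d * Rabs d = d ^ 2) by (rewrite <- Rabs_mult, Rabs_pos_eq; nra).
assert (Hd := Rabs_pos d).
assert (Hamgm : 2 * eps * Rabs d <= eps * (d ^ 2 + 1))
  by (assert (0 <= eps * (Rabs d - 1) ^ 2) by (apply Rmult_le_pos; [lra | apply pow2_ge_0]); nra).
assert (Rabs d * Rabs e <= Rabs d * (L * Rabs d + eps)) by (apply Rmult_le_compat_l; lra).
assert (eps * d ^ 2 <= d ^ 2) by (assert (0 <= d ^ 2) by apply pow2_ge_0; nra).
nra.
Qed.

Lemma gronwall_sq (y1 y2 D1 D2 : R -> R) L eps x0 x1 :
  (forall x, is_derive y1 x (D1 x)) -> (forall x, is_derive y2 x (D2 x)) ->
  0 <= L -> 0 <= eps <= 1 -> x0 <= x1 ->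
  (forall x, x0 <= x <= x1 -> Rabs (D1 x - D2 x) <= L * Rabs (y1 x - y2 x) + eps) ->
  (y1 x1 - y2 x1) ^ 2 <= ((y1 x0 - y2 x0) ^ 2 + eps) * exp ((2 * L + 1) * (x1 - x0)).
Proof.
intros H1 H2 HL Heps Hx Hb.
set (k := 2 * L + 1).
set (w := fun x => exp (- (k * (x - x0))) * ((y1 x - y2 x) ^ 2 + eps)).
assert (Hw : w x1 <= w x0).
{ apply (le_of_derive_nonpos w (fun x => exp (- (k * (x - x0))) *
    (- k * ((y1 x - y2 x) ^ 2 + eps) + 2 * (y1 x - y2 x) * (D1 x - D2 x))) x0 x1 Hx).
  - intro x. unfold w.
    assert (E1 : ex_derive y1 x) by (exists (D1 x); apply H1).
    assert (E2 : ex_derive y2 x) by (exists (D2 x); apply H2).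
    auto_derive; [tauto|].
    replace (Derive (fun t => y1 t) x) with (D1 x)
      by (symmetry; apply is_derive_unique, H1).
    replace (Derive (fun t => y2 t) x) with (D2 x)
      by (symmetry; apply is_derive_unique, H2).
    unfold Rminus. ring.
  - intros x Hxx.
    assert (0 < exp (- (k * (x - x0)))) by apply exp_pos.
    assert (2 * (y1 x - y2 x) * (D1 x - D2 x) <= k * ((y1 x - y2 x) ^ 2 + eps))
      by (apply sq_derive_le; auto).
    nra. }
unfold w in Hw. rewrite Rminus_diag, Rmult_0_r, Ropp_0, exp_0, Rmult_1_l in Hw.
assert (Hexp : exp (k * (x1 - x0)) * exp (- (k * (x1 - x0))) = 1)
  by (rewrite <- exp_plus, Rplus_opp_r; apply exp_0).
assert (0 < exp (k * (x1 - x0))) by apply exp_pos.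
assert (0 <= (y1 x1 - y2 x1) ^ 2) by apply pow2_ge_0.
assert (0 <= (y1 x0 - y2 x0) ^ 2) by apply pow2_ge_0.
nra.
Qed.

Lemma is_derive_reflect (y : R -> R) t d :
  is_derive y (- t) d -> is_derive (fun s => y (- s)) t (- d).
Proof.
intros H.
assert (Hopp : is_derive (fun s : R => - s) t (-1)) by (auto_derive; [exact I | ring]).
replace (- d) with (scal (-1) d) by (unfold scal; simpl; unfold mult; simpl; ring).
exact (is_derive_comp y (fun s => - s) t d (-1) H Hopp).
Qed.

Lemma gronwall_sq_backward (y1 y2 D1 D2 : R -> R) L eps x0 x1 :
  (forall x, is_derive y1 x (D1 x)) -> (forall x, is_derive y2 x (D2 x)) ->
  0 <= L -> 0 <= eps <= 1 -> x1 <= x0 ->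
  (forall x, x1 <= x <= x0 -> Rabs (D1 x - D2 x) <= L * Rabs (y1 x - y2 x) + eps) ->
  (y1 x1 - y2 x1) ^ 2 <= ((y1 x0 - y2 x0) ^ 2 + eps) * exp ((2 * L + 1) * (x0 - x1)).
Proof.
intros H1 H2 HL Heps Hx Hb.
assert (G := gronwall_sq (fun s => y1 (- s)) (fun s => y2 (- s))
  (fun s => - D1 (- s)) (fun s => - D2 (- s)) L eps (- x0) (- x1)).
cbv beta in G. rewrite !Ropp_involutive in G.
replace (x0 - x1) with (- x1 - - x0) by ring.
apply G; auto; [intro x; apply is_derive_reflect; auto.. | lra |].
intros x Hxx. replace (- D1 (- x) - - D2 (- x)) with (- (D1 (- x) - D2 (- x))) by ring.
rewrite Rabs_Ropp. apply Hb. lra.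
Qed.

Lemma ode_solutions_eq (y1 y2 D1 D2 : R -> R) L x0 :
  (forall x, is_derive y1 x (D1 x)) -> (forall x, is_derive y2 x (D2 x)) -> 0 <= L ->
  (forall x, Rabs (D1 x - D2 x) <= L * Rabs (y1 x - y2 x)) ->
  y1 x0 = y2 x0 -> forall x, y1 x = y2 x.
Proof.
intros H1 H2 HL Hb H0 x.
assert (Hb0 : forall x, Rabs (D1 x - D2 x) <= L * Rabs (y1 x - y2 x) + 0)
  by (intro t; rewrite Rplus_0_r; apply Hb).
assert (Hsq : (y1 x - y2 x) ^ 2 <= 0).
{ destruct (Rle_or_lt x0 x).
  - assert (G := gronwall_sq y1 y2 D1 D2 L 0 x0 x H1 H2 HL ltac:(lra) ltac:(lra)
      (fun t _ => Hb0 t)).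
    rewrite H0, Rminus_diag in G. simpl in G. lra.
  - assert (G := gronwall_sq_backward y1 y2 D1 D2 L 0 x0 x H1 H2 HL ltac:(lra) ltac:(lra)
      (fun t _ => Hb0 t)).
    rewrite H0, Rminus_diag in G. simpl in G. lra. }
assert (0 <= (y1 x - y2 x) ^ 2) by apply pow2_ge_0. nra.
Qed.

(** * Global solutions by Picard iteration *)

Section Picard.

Variables (F : R -> R -> R) (L B a : R).
Hypothesis L_pos : 0 < L.
Hypothesis F_lip : forall x y z, Rabs (F x y - F x z) <= L * Rabs (y - z).
Hypothesis F_cont : forall x y, continuous (fun t => F t y) x.
Hypothesis F_bound : forall x, Rabs (F x a) <= B.

Lemma continuous_superposition u x :
  continuous u x -> continuous (fun t => F t (u t)) x.
Proof.
intros Hu. apply continuous_epsilon_delta. intros eps Heps.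
destruct (proj1 (continuous_epsilon_delta _ x) (F_cont x (u x)) (eps / 2))
  as [d1 [Hd1 H1]]; [lra|].
destruct (proj1 (continuous_epsilon_delta u x) Hu (eps / (2 * L)))
  as [d2 [Hd2 H2]]; [apply Rdiv_lt_0_compat; lra|].
exists (Rmin d1 d2). split; [apply Rmin_glb_lt; lra|]. intros z Hz.
assert (Hz1 : Rabs (z - x) < d1) by (eapply Rlt_le_trans; [apply Hz | apply Rmin_l]).
assert (Hz2 : Rabs (z - x) < d2) by (eapply Rlt_le_trans; [apply Hz | apply Rmin_r]).
replace (F z (u z) - F x (u x)) with ((F z (u z) - F z (u x)) + (F z (u x) - F x (u x)))
  by ring.
eapply Rle_lt_trans; [apply Rabs_triang|].
assert (L * Rabs (u z - u x) < L * (eps / (2 * L))) by (apply Rmult_lt_compat_l; auto).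
replace (L * (eps / (2 * L))) with (eps / 2) in * by (field; lra).
specialize (F_lip z (u z) (u x)). specialize (H1 z Hz1). lra.
Qed.

Fixpoint picard (n : nat) : R -> R :=
  match n with
  | O => fun _ => a
  | S m => fun x => a + RInt (fun t => F t (picard m t)) 0 x
  end.

Lemma picard_at0 n : picard n 0 = a.
Proof. destruct n; simpl; [reflexivity|]. rewrite RInt_point. unfold zero; simpl; ring. Qed.

Lemma picard_succ_derive n : (forall x, continuous (picard n) x) ->
  forall x, is_derive (picard (S n)) x (F x (picard n x)).
Proof.
intros Hn x.
assert (Hg : forall t, continuous (fun s => F s (picard n s)) t)
  by (intro t; apply continuous_superposition, Hn).
replace (F x (picard n x)) with (plus zero (F x (picard n x)))
  by (unfold plus, zero; simpl; ring).
apply (is_derive_plus (fun _ => a) (fun b => RInt (fun t => F t (picard n t)) 0 b));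
  [exact (is_derive_const (K := R_AbsRing) (V := R_NormedModule) a x)|].
apply (is_derive_RInt (fun t => F t (picard n t)) _ 0); [|apply Hg].
apply filter_forall. intro b.
apply (RInt_correct (V := R_CompleteNormedModule)),
  (ex_RInt_continuous (V := R_CompleteNormedModule)).
intros; apply Hg.
Qed.

Lemma picard_continuous n x : continuous (picard n) x.
Proof.
revert x. induction n as [|n IH]; intro x; [apply continuous_const|].
apply (ex_derive_continuous (picard (S n))). eexists. apply picard_succ_derive, IH.
Qed.

Lemma picard_derive n x : is_derive (picard (S n)) x (F x (picard n x)).
Proof. apply picard_succ_derive, picard_continuous. Qed.

Let B_nonneg : 0 <= B.
Proof. specialize (F_bound 0). pose proof (Rabs_pos (F 0 a)). lra. Qed.

(* With the weight exp (2 L |x|), each Picard step halves the distance. *)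
Lemma picard_succ_dist n x :
  Rabs (picard (S n) x - picard n x) <= B / L * (/ 2) ^ S n * (exp (2 * L * Rabs x) - 1).
Proof.
assert (HB := B_nonneg).
assert (Hexp : forall t, 1 <= exp (2 * L * Rabs t)).
{ intro t. pose proof (exp_ineq1_le (2 * L * Rabs t)).
  assert (0 <= Rabs t) by apply Rabs_pos. nra. }
revert x. induction n as [|n IH]; intro x.
- apply (Rabs_le_exp_of_derive (fun t => picard 1 t - picard 0 t) (fun t => F t a - 0));
    [lra | rewrite !picard_at0; ring | |].
  + intro t. apply (is_derive_minus (picard 1) (picard 0)); [apply picard_derive|].
    exact (is_derive_const (K := R_AbsRing) (V := R_NormedModule) a t).
  + intro t. rewrite Rminus_0_r.
    replace (B / L * (/ 2) ^ 1 * (2 * L)) with B by (simpl; field; lra).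
    specialize (F_bound t). specialize (Hexp t). nra.
- apply (Rabs_le_exp_of_derive (fun t => picard (S (S n)) t - picard (S n) t)
    (fun t => F t (picard (S n) t) - F t (picard n t)));
    [lra | rewrite !picard_at0; ring | |].
  + intro t. apply (is_derive_minus (picard (S (S n))) (picard (S n)));
      apply picard_derive.
  + intro t. replace (B / L * (/ 2) ^ S (S n) * (2 * L)) with (L * (B / L * (/ 2) ^ S n))
      by (simpl; field; lra).
    eapply Rle_trans; [apply F_lip|].
    assert (0 <= B / L * (/ 2) ^ S n)
      by (apply Rmult_le_pos; [apply Rdiv_le_0_compat | apply pow_le]; lra).
    specialize (IH t). specialize (Hexp t). nra.
Qed.

Lemma picard_dist n m x : (n <= m)%nat ->
  Rabs (picard m x - picard n x) <= B / L * exp (2 * L * Rabs x) * (/ 2) ^ n.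
Proof.
intros Hnm. set (E := exp (2 * L * Rabs x)).
assert (HE : 0 < E) by apply exp_pos.
assert (HK : 0 <= B / L) by (apply Rdiv_le_0_compat; [apply B_nonneg | lra]).
assert (Hk : forall k, Rabs (picard (n + k) x - picard n x) <=
                       B / L * E * ((/ 2) ^ n - (/ 2) ^ (n + k))).
{ induction k as [|k IH].
  - rewrite Nat.add_0_r, !Rminus_diag, Rabs_R0, Rmult_0_r. lra.
  - rewrite Nat.add_succ_r.
    replace (picard (S (n + k)) x - picard n x) with
      ((picard (S (n + k)) x - picard (n + k) x) + (picard (n + k) x - picard n x)) by ring.
    eapply Rle_trans; [apply Rabs_triang|].
    assert (Hs := picard_succ_dist (n + k) x). fold E in Hs.
    assert (0 <= (/ 2) ^ (n + k)) by (apply pow_le; lra).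
    simpl in Hs |- *. nra. }
replace m with (n + (m - n))%nat by lia.
eapply Rle_trans; [apply Hk|].
assert (0 <= (/ 2) ^ (n + (m - n))) by (apply pow_le; lra).
assert (0 <= B / L * E) by nra. nra.
Qed.

Lemma picard_unif_cauchy r (eps : posreal) : exists N, forall n m x,
  - r < x < r -> (N <= n)%nat -> (N <= m)%nat -> Rabs (picard n x - picard m x) < eps.
Proof.
set (C := B / L * exp (2 * L * Rabs r)).
assert (HC : 0 <= C)
  by (apply Rmult_le_pos; [apply Rdiv_le_0_compat; [apply B_nonneg | lra] | apply Rlt_le, exp_pos]).
destruct (pow_lt_1_zero (/ 2) ltac:(rewrite Rabs_pos_eq; lra) (eps / (2 * (C + 1))))
  as [N HN]; [apply Rdiv_lt_0_compat; [apply cond_pos | lra]|].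
exists N. intros n m x Hx Hn Hm.
specialize (HN N (le_n N)). rewrite Rabs_pos_eq in HN by (apply pow_le; lra).
assert (Hbound : forall k, (N <= k)%nat -> Rabs (picard k x - picard N x) <= C * (/ 2) ^ N).
{ intros k Hk. eapply Rle_trans; [apply picard_dist, Hk|].
  apply Rmult_le_compat_r; [apply pow_le; lra|].
  apply Rmult_le_compat_l; [apply Rdiv_le_0_compat; [apply B_nonneg | lra]|].
  apply exp_le_mono. apply Rmult_le_compat_l; [lra|].
  apply Rabs_le. pose proof (Rle_abs r). lra. }
replace (picard n x - picard m x) with
  ((picard n x - picard N x) - (picard m x - picard N x)) by ring.
eapply Rle_lt_trans; [apply Rabs_triang|]. rewrite Rabs_Ropp.
assert (C * (/ 2) ^ N < eps / 2).
{ apply Rle_lt_trans with ((C + 1) * (/ 2) ^ N);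
    [assert (0 <= (/ 2) ^ N) by (apply pow_le; lra); nra|].
  apply (Rmult_lt_reg_l (/ (C + 1))); [apply Rinv_0_lt_compat; lra|].
  replace (/ (C + 1) * ((C + 1) * (/ 2) ^ N)) with ((/ 2) ^ N) by (field; lra).
  replace (/ (C + 1) * (eps / 2)) with (eps / (2 * (C + 1))) by (field; lra). exact HN. }
pose proof (Hbound n Hn). pose proof (Hbound m Hm). lra.
Qed.

Definition picard_limit x := real (Lim_seq (fun n => picard n x)).

Lemma picard_limit_at0 : picard_limit 0 = a.
Proof.
unfold picard_limit. rewrite (Lim_seq_ext _ (fun _ => a)) by apply picard_at0.
rewrite Lim_seq_const. reflexivity.
Qed.

Lemma is_lim_seq_picard x : is_lim_seq (fun n => picard n x) (picard_limit x).
Proof.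
assert (Hex : ex_finite_lim_seq (fun n => picard n x)).
{ apply ex_lim_seq_cauchy_corr. intro eps.
  destruct (picard_unif_cauchy (Rabs x + 1) eps) as [N HN].
  exists N. intros n m Hn Hm. apply HN; auto.
  split; [pose proof (Rle_abs (- x)) as Hx; rewrite Rabs_Ropp in Hx | pose proof (Rle_abs x)];
    lra. }
destruct Hex as [l Hl]. unfold picard_limit. rewrite (is_lim_seq_unique _ _ Hl). exact Hl.
Qed.

Lemma picard_limit_derive x : is_derive picard_limit x (F x (picard_limit x)).
Proof.
set (r := Rabs x + 1). set (D := fun y => - r < y < r).
assert (HxD : D x)
  by (unfold D, r; split; [pose proof (Rle_abs (- x)) as Hx; rewrite Rabs_Ropp in Hx
                           | pose proof (Rle_abs x)]; lra).
assert (Hderive : forall n y, Derive (picard (S n)) y = F y (picard n y))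
  by (intros n y; apply is_derive_unique, picard_derive).
assert (Hcvu : CVU_dom (fun n => picard (S n)) D).
{ apply CVU_dom_cauchy. intro eps. destruct (picard_unif_cauchy r eps) as [N HN].
  exists N. intros n m y Hy Hn Hm. apply HN; auto. }
assert (Hcvu' : CVU_dom (fun n y => Derive (picard (S n)) y) D).
{ apply CVU_dom_cauchy. intro eps.
  destruct (picard_unif_cauchy r (mkposreal (eps / L) (Rdiv_lt_0_compat _ _ (cond_pos eps) L_pos)))
    as [N HN].
  exists N. intros n m y Hy Hn Hm. rewrite !Hderive.
  eapply Rle_lt_trans; [apply F_lip|]. specialize (HN n m y Hy Hn Hm). simpl in HN.
  apply (Rmult_lt_compat_l L) in HN; [|lra].
  replace (L * (eps / L)) with (pos eps) in HN by (field; lra). exact HN. }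
assert (Hopen : open D) by apply (open_and _ _ (open_gt (- r)) (open_lt r)).
assert (Hconn : is_connected D) by (intros y z w Hy Hz Hw; unfold D in *; lra).
assert (Hdcont : forall n y, D y -> continuity_pt (Derive (picard (S n))) y).
{ intros n y _. apply continuity_pt_filterlim.
  apply (continuous_ext (fun z => F z (picard n z))); [intro z; symmetry; apply Hderive|].
  apply continuous_superposition, picard_continuous. }
assert (Hlim := CVU_Derive (fun n => picard (S n)) D Hopen Hconn Hcvu
  (fun n y _ => ex_intro _ _ (picard_derive n y)) Hdcont Hcvu' x HxD).
apply (is_derive_ext (fun y => real (Lim_seq (fun n => picard (S n) y)))).
{ intro y. unfold picard_limit. rewrite (Lim_seq_incr_1 (fun n => picard n y)). reflexivity. }
replace (F x (picard_limit x)) with (real (Lim_seq (fun n => Derive (picard (S n)) x))).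
{ exact Hlim. }
rewrite (Lim_seq_ext _ _ (fun n => Hderive n x)).
rewrite (is_lim_seq_unique _ (F x (picard_limit x))); [reflexivity|].
apply is_lim_seq_continuous; [|apply is_lim_seq_picard].
apply continuity_pt_filterlim, (lipschitz_continuous (F x) L (F_lip x)).
Qed.

End Picard.

(** * Periodic solutions of the cell equation *)

Lemma periodic1_nat f : periodic1 f -> forall n x, f (x + INR n) = f x.
Proof.
intros Hp n. induction n as [|n IH]; intro x; [rewrite Rplus_0_r; reflexivity|].
rewrite S_INR, <- Rplus_assoc, Hp. apply IH.
Qed.

Lemma periodic1_Z f : periodic1 f -> forall k x, f (x + IZR k) = f x.
Proof.
intros Hp [|p|p] x; [rewrite Rplus_0_r; reflexivity | |].
- change (IZR (Z.pos p)) with (IPR p). rewrite <- INR_IPR. apply periodic1_nat, Hp.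
- change (IZR (Z.neg p)) with (- IPR p). rewrite <- INR_IPR.
  rewrite <- (periodic1_nat f Hp (Pos.to_nat p) (x + - INR (Pos.to_nat p))).
  f_equal. ring.
Qed.

Lemma periodic1_frac_part f : periodic1 f -> forall x, f x = f (frac_part x).
Proof.
intros Hp x. unfold frac_part.
rewrite <- (periodic1_Z f Hp (Int_part x) (x - IZR (Int_part x))). f_equal. ring.
Qed.

Lemma periodic1_max f : periodic1 f -> (forall x, continuous f x) ->
  exists c, forall x, f x <= f c.
Proof.
intros Hp Hc.
destruct (continuity_ab_maj f 0 1) as [c [Hmax _]]; [lra | |].
{ intros x _. apply continuity_pt_filterlim, Hc. }
exists c. intro x. rewrite (periodic1_frac_part f Hp x).
destruct (base_fp x). apply Hmax. lra.
Qed.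

Lemma periodic1_min f : periodic1 f -> (forall x, continuous f x) ->
  exists c, forall x, f c <= f x.
Proof.
intros Hp Hc.
destruct (periodic1_max (fun x => - f x)) as [c Hc']; [intro x; rewrite Hp; reflexivity | |].
{ intro x. apply (continuous_opp f), Hc. }
exists c. intro x. specialize (Hc' x). lra.
Qed.

Lemma periodic1_oscillation_bounded f : periodic1 f -> (forall x, continuous f x) ->
  exists b, forall x, Rabs (f x - f 0) <= b.
Proof.
intros Hp Hc.
destruct (periodic1_max f Hp Hc) as [cM HM]. destruct (periodic1_min f Hp Hc) as [cm Hm].
exists (f cM - f cm). intro x. pose proof (HM x). pose proof (Hm x).
pose proof (HM 0). pose proof (Hm 0). apply Rabs_le. lra.
Qed.

Definition periodic_cell_sol (G V : R -> R) (H : R) (f : R -> R) : Prop :=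
  (forall x, is_derive f x (H - V x - G (f x))) /\ periodic1 f.

Section CellSolutions.

Variables G V : R -> R.

Lemma periodic_cell_sol_continuous H f :
  periodic_cell_sol G V H f -> forall x, continuous f x.
Proof. intros [Hd _] x. apply (ex_derive_continuous f). eexists. apply Hd. Qed.

Lemma periodic_cell_sol_extrema H f : periodic_cell_sol G V H f ->
  exists xm xM, (forall x, f xm <= f x <= f xM) /\
    V xm + G (f xm) = H /\ V xM + G (f xM) = H.
Proof.
intros Hf. assert (Hc := periodic_cell_sol_continuous H f Hf). destruct Hf as [Hd Hp].
destruct (periodic1_min f Hp Hc) as [xm Hm]. destruct (periodic1_max f Hp Hc) as [xM HM].
exists xm, xM. split; [intro x; split; auto|split].
- assert (Hopp : is_derive (fun x => - f x) xm (- (H - V xm - G (f xm))))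
    by exact (is_derive_opp f xm _ (Hd xm)).
  assert (Hmax : forall x, - f x <= - f xm) by (intro x; specialize (Hm x); lra).
  assert (E := derive_eq0_at_max _ _ _ Hmax Hopp). lra.
- assert (E := derive_eq0_at_max f xM _ HM (Hd xM)). lra.
Qed.

Lemma periodic_cell_sol_bounded H f : periodic_cell_sol G V H f ->
  exists r, forall x, Rabs (f x) <= r.
Proof.
intros Hf. destruct (periodic_cell_sol_extrema H f Hf) as [xm [xM [Hb _]]].
exists (Rabs (f xm) + Rabs (f xM)). intro x. specialize (Hb x).
pose proof (Rle_abs (f xM)). pose proof (Rle_abs (- f xm)). rewrite Rabs_Ropp in *.
pose proof (Rabs_pos (f xm)). pose proof (Rabs_pos (f xM)). apply Rabs_le. lra.
Qed.

Lemma periodic_cell_sol_touch_le H1 H2 f1 f2 x0 :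
  periodic_cell_sol G V H1 f1 -> periodic_cell_sol G V H2 f2 -> f1 x0 = f2 x0 -> H1 <= H2.
Proof.
intros [Hd1 Hp1] [Hd2 Hp2] H0. destruct (Rle_or_lt H1 H2) as [|Hlt]; [assumption | exfalso].
assert (Hpos := pos_right_of_zero (fun x => f1 x - f2 x)
  (fun x => (H1 - V x - G (f1 x)) - (H2 - V x - G (f2 x))) x0).
specialize (Hpos (fun x => is_derive_minus f1 f2 _ _ _ (Hd1 x) (Hd2 x))).
assert (0 < f1 (x0 + 1) - f2 (x0 + 1)); [apply Hpos; [|lra|lra] | rewrite Hp1, Hp2 in *; lra].
intros x Hx. replace (f2 x) with (f1 x) by lra. lra.
Qed.

Hypothesis G_loc_lip : locally_lipschitz G.

Lemma periodic_cell_sol_touch H1 H2 f1 f2 x0 :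
  periodic_cell_sol G V H1 f1 -> periodic_cell_sol G V H2 f2 -> f1 x0 = f2 x0 ->
  H1 = H2 /\ forall x, f1 x = f2 x.
Proof.
intros Hf1 Hf2 H0.
assert (HH : H1 = H2).
{ apply Rle_antisym; [apply (periodic_cell_sol_touch_le _ _ f1 f2 x0) |
                      apply (periodic_cell_sol_touch_le _ _ f2 f1 x0)]; auto. }
split; [exact HH|]. subst H2.
destruct (periodic_cell_sol_bounded H1 f1 Hf1) as [r1 Hr1].
destruct (periodic_cell_sol_bounded H1 f2 Hf2) as [r2 Hr2].
destruct (G_loc_lip (r1 + r2)) as [LG [HLG HLip]].
assert (Hr : 0 <= r1 /\ 0 <= r2)
  by (pose proof (Rabs_pos (f1 0)); pose proof (Rabs_pos (f2 0));
      specialize (Hr1 0); specialize (Hr2 0); lra).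
apply (ode_solutions_eq f1 f2 _ _ LG x0 (proj1 Hf1) (proj1 Hf2) HLG); [|exact H0].
intro x. replace (H1 - V x - G (f1 x) - (H1 - V x - G (f2 x))) with (G (f2 x) - G (f1 x))
  by ring.
rewrite (Rabs_minus_sym (f1 x)). specialize (Hr1 x). specialize (Hr2 x).
apply HLip; lra.
Qed.

Lemma periodic_cell_sol_lt H1 H2 f1 f2 :
  periodic_cell_sol G V H1 f1 -> periodic_cell_sol G V H2 f2 -> f1 0 < f2 0 ->
  forall x, f1 x < f2 x.
Proof.
intros Hf1 Hf2 H0.
apply lt_of_never_eq; [eapply periodic_cell_sol_continuous; eauto .. | |exact H0].
intros x Hx. destruct (periodic_cell_sol_touch H1 H2 f1 f2 x Hf1 Hf2 Hx) as [_ Heq].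
rewrite Heq in H0. lra.
Qed.

Lemma periodic_cell_sol_unique_mean H1 H2 f1 f2 :
  periodic_cell_sol G V H1 f1 -> periodic_cell_sol G V H2 f2 ->
  RInt f1 0 1 = RInt f2 0 1 -> H1 = H2 /\ f1 = f2.
Proof.
intros Hf1 Hf2 Hmean.
assert (C1 := periodic_cell_sol_continuous _ _ Hf1).
assert (C2 := periodic_cell_sol_continuous _ _ Hf2).
destruct (Rtotal_order (f1 0) (f2 0)) as [Hlt|[Heq|Hgt]].
- assert (Hlt' := periodic_cell_sol_lt _ _ _ _ Hf1 Hf2 Hlt).
  assert (RInt f1 0 1 < RInt f2 0 1)
    by (apply RInt_lt; [lra | intros; apply C2 | intros; apply C1 | intros; apply Hlt']).
  lra.
- destruct (periodic_cell_sol_touch _ _ _ _ 0 Hf1 Hf2 Heq) as [HH Hf].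
  split; [exact HH | apply functional_extensionality, Hf].
- assert (Hlt' := periodic_cell_sol_lt _ _ _ _ Hf2 Hf1 Hgt).
  assert (RInt f2 0 1 < RInt f1 0 1)
    by (apply RInt_lt; [lra | intros; apply C1 | intros; apply C2 | intros; apply Hlt']).
  lra.
Qed.

End CellSolutions.

(** * Shooting for the truncated equation *)

Definition clamp (M p : R) : R := Rmax (- M) (Rmin M p).

Lemma clamp_lipschitz M p q : 0 <= M -> Rabs (clamp M p - clamp M q) <= Rabs (p - q).
Proof.
intros HM. unfold clamp, Rmax, Rmin.
destruct (Rle_or_lt p q);
  [rewrite (Rabs_left1 (p - q)) by lra | rewrite (Rabs_pos_eq (p - q)) by lra];
  repeat destruct Rle_dec; apply Rabs_le; lra.
Qed.

Lemma Rabs_clamp M p : 0 <= M -> Rabs (clamp M p) <= M.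
Proof. intros HM. unfold clamp, Rmax, Rmin. repeat destruct Rle_dec; apply Rabs_le; lra. Qed.

Lemma clamp_id M p : Rabs p <= M -> clamp M p = p.
Proof.
intros Hp. apply Rabs_le_between in Hp. unfold clamp, Rmax, Rmin. repeat destruct Rle_dec; lra.
Qed.

Lemma clamp_above M p : 0 <= M -> M <= p -> clamp M p = M.
Proof. intros HM Hp. unfold clamp, Rmax, Rmin. repeat destruct Rle_dec; lra. Qed.

Lemma clamp_below M p : 0 <= M -> p <= - M -> clamp M p = - M.
Proof. intros HM Hp. unfold clamp, Rmax, Rmin. repeat destruct Rle_dec; lra. Qed.

Section Shooting.

Variables (G V : R -> R) (M LG Vb : R).
Hypothesis M_pos : 0 < M.
Hypothesis LG_nonneg : 0 <= LG.
Hypothesis G_lip :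
  forall p q, Rabs p <= M -> Rabs q <= M -> Rabs (G p - G q) <= LG * Rabs (p - q).
Hypothesis V_cont : forall x, continuous V x.
Hypothesis V_per : periodic1 V.
Hypothesis V_osc : forall x, Rabs (V x - V 0) <= Vb.

Lemma G_clamp_lipschitz p q : Rabs (G (clamp M p) - G (clamp M q)) <= LG * Rabs (p - q).
Proof.
eapply Rle_trans; [apply G_lip; apply Rabs_clamp; lra|].
apply Rmult_le_compat_l, clamp_lipschitz; lra.
Qed.

(* Clamping makes the nonlinearity globally Lipschitz, so Picard iteration applies. *)
Definition trunc_sol H a := picard_limit (fun x y => H - V x - G (clamp M y)) a.

Lemma trunc_sol_at0 H a : trunc_sol H a 0 = a.
Proof. apply picard_limit_at0. Qed.

Lemma trunc_sol_derive H a x :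
  is_derive (trunc_sol H a) x (H - V x - G (clamp M (trunc_sol H a x))).
Proof.
apply (picard_limit_derive (fun x y => H - V x - G (clamp M y)) (LG + 1)
  (Rabs H + (Rabs (V 0) + Vb) + Rabs (G (clamp M a))) a); [lra | | |].
- intros t y z. replace (H - V t - G (clamp M y) - (H - V t - G (clamp M z)))
    with (G (clamp M z) - G (clamp M y)) by ring.
  rewrite (Rabs_minus_sym y). eapply Rle_trans; [apply G_clamp_lipschitz|].
  pose proof (Rabs_pos (z - y)). nra.
- intros t y. apply (continuous_minus (fun s => H - V s) (fun _ => G (clamp M y)));
    [apply (continuous_minus (fun _ => H) V); [apply continuous_const | apply V_cont]
    | apply continuous_const].
- intro t. specialize (V_osc t).
  pose proof (Rabs_triang (V 0) (V t - V 0)). replace (V 0 + (V t - V 0)) with (V t) in * by ring.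
  pose proof (Rabs_triang (H - V t) (- G (clamp M a))). pose proof (Rabs_triang H (- V t)).
  rewrite Rabs_Ropp in *. unfold Rminus in *. lra.
Qed.

Lemma trunc_sol_continuous H a x : continuous (trunc_sol H a) x.
Proof. apply (ex_derive_continuous (trunc_sol H a)). eexists. apply trunc_sol_derive. Qed.

Lemma trunc_sol_sq_dist H H' a a' x : 0 <= x <= 1 -> Rabs (H - H') <= 1 ->
  (trunc_sol H a x - trunc_sol H' a' x) ^ 2 <= ((a - a') ^ 2 + Rabs (H - H')) * exp (2 * LG + 1).
Proof.
intros Hx HH.
assert (Hgr := gronwall_sq (trunc_sol H a) (trunc_sol H' a') _ _ LG (Rabs (H - H')) 0 x
  (trunc_sol_derive H a) (trunc_sol_derive H' a') LG_nonneg (conj (Rabs_pos _) HH) (proj1 Hx)).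
rewrite !trunc_sol_at0, Rminus_0_r in Hgr.
eapply Rle_trans; [apply Hgr|].
- intros t _.
  replace (H - V t - G (clamp M (trunc_sol H a t)) - (H' - V t - G (clamp M (trunc_sol H' a' t))))
    with ((H - H') - (G (clamp M (trunc_sol H a t)) - G (clamp M (trunc_sol H' a' t)))) by ring.
  eapply Rle_trans; [apply Rabs_triang|]. rewrite Rabs_Ropp.
  pose proof (G_clamp_lipschitz (trunc_sol H a t) (trunc_sol H' a' t)). lra.
- apply Rmult_le_compat_l; [pose proof (pow2_ge_0 (a - a')); pose proof (Rabs_pos (H - H')); lra|].
  apply exp_le_mono. nra.
Qed.

Lemma trunc_sol_close eps : 0 < eps -> exists del, 0 < del /\
  forall H H' a a' x, 0 <= x <= 1 -> Rabs (H - H') < del -> Rabs (a - a') < del ->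
    Rabs (trunc_sol H a x - trunc_sol H' a' x) < eps.
Proof.
intros Heps. set (E := exp (2 * LG + 1)).
assert (HE : 0 < E) by apply exp_pos.
exists (Rmin 1 (eps * eps / (2 * E))).
split; [apply Rmin_glb_lt; [lra | apply Rdiv_lt_0_compat; nra]|].
intros H H' a a' x Hx HH Ha.
assert (HH1 : Rabs (H - H') < 1) by (eapply Rlt_le_trans; [apply HH | apply Rmin_l]).
assert (HH2 : Rabs (H - H') < eps * eps / (2 * E))
  by (eapply Rlt_le_trans; [apply HH | apply Rmin_r]).
assert (Ha1 : Rabs (a - a') < 1) by (eapply Rlt_le_trans; [apply Ha | apply Rmin_l]).
assert (Ha2 : Rabs (a - a') < eps * eps / (2 * E))
  by (eapply Rlt_le_trans; [apply Ha | apply Rmin_r]).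
assert (Hsq := trunc_sol_sq_dist H H' a a' x Hx (Rlt_le _ _ HH1)). fold E in Hsq.
assert (Haa : (a - a') ^ 2 <= Rabs (a - a')).
{ rewrite <- (Rabs_pos_eq ((a - a') ^ 2)) by apply pow2_ge_0.
  rewrite <- RPow_abs. simpl. pose proof (Rabs_pos (a - a')). nra. }
assert (Hlt : ((a - a') ^ 2 + Rabs (H - H')) * E < eps * eps).
{ replace (eps * eps) with (2 * (eps * eps / (2 * E)) * E) by (field; lra).
  apply Rmult_lt_compat_r; lra. }
set (d := trunc_sol H a x - trunc_sol H' a' x) in *.
rewrite <- (Rabs_pos_eq eps) by lra. apply Rsqr_lt_abs_0. unfold Rsqr. simpl in Hsq. lra.
Qed.

Lemma trunc_sol_continuous_H a x H : 0 <= x <= 1 -> continuous (fun H' => trunc_sol H' a x) H.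
Proof.
intros Hx. apply continuous_epsilon_delta. intros eps Heps.
destruct (trunc_sol_close eps Heps) as [del [Hdel Hclose]].
exists del. split; [exact Hdel|]. intros H' HH'.
apply Hclose; [exact Hx | exact HH' | rewrite Rminus_diag, Rabs_R0; exact Hdel].
Qed.

Lemma trunc_sol_continuous_init H x a : 0 <= x <= 1 -> continuous (fun a' => trunc_sol H a' x) a.
Proof.
intros Hx. apply continuous_epsilon_delta. intros eps Heps.
destruct (trunc_sol_close eps Heps) as [del [Hdel Hclose]].
exists del. split; [exact Hdel|]. intros a' Ha'.
apply Hclose; [exact Hx | rewrite Rminus_diag, Rabs_R0; exact Hdel | exact Ha'].
Qed.

Lemma trunc_sol_lt_H H H' a x : H < H' -> 0 < x -> trunc_sol H a x < trunc_sol H' a x.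
Proof.
intros HH Hx.
assert (Hpos := pos_right_of_zero (fun t => trunc_sol H' a t - trunc_sol H a t)
  (fun t => (H' - V t - G (clamp M (trunc_sol H' a t)))
             - (H - V t - G (clamp M (trunc_sol H a t)))) 0).
enough (0 < trunc_sol H' a x - trunc_sol H a x) by lra.
apply Hpos; [| | rewrite !trunc_sol_at0; ring | exact Hx].
- intro t. apply (is_derive_minus (trunc_sol H' a) (trunc_sol H a)); apply trunc_sol_derive.
- intros t Ht. replace (trunc_sol H' a t) with (trunc_sol H a t) by lra. lra.
Qed.

Lemma trunc_sol_lt_start H a : Rabs a <= M -> H < G a + V 0 - Vb -> trunc_sol H a 1 < a.
Proof.
intros Ha HH.
assert (Hpos := pos_right_of_zero (fun t => a - trunc_sol H a t)
  (fun t => 0 - (H - V t - G (clamp M (trunc_sol H a t)))) 0).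
enough (0 < a - trunc_sol H a 1) by lra.
apply Hpos; [| | rewrite trunc_sol_at0; ring | lra].
- intro t. apply (is_derive_minus (fun _ => a) (trunc_sol H a)); [|apply trunc_sol_derive].
  exact (is_derive_const (K := R_AbsRing) (V := R_NormedModule) a t).
- intros t Ht. replace (trunc_sol H a t) with a by lra. rewrite clamp_id by exact Ha.
  specialize (V_osc t). apply Rabs_le_between in V_osc. lra.
Qed.

Lemma trunc_sol_gt_start H a : Rabs a <= M -> G a + V 0 + Vb < H -> a < trunc_sol H a 1.
Proof.
intros Ha HH.
assert (Hpos := pos_right_of_zero (fun t => trunc_sol H a t - a)
  (fun t => (H - V t - G (clamp M (trunc_sol H a t))) - 0) 0).
enough (0 < trunc_sol H a 1 - a) by lra.
apply Hpos; [| | rewrite trunc_sol_at0; ring | lra].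
- intro t. apply (is_derive_minus (trunc_sol H a) (fun _ => a)); [apply trunc_sol_derive|].
  exact (is_derive_const (K := R_AbsRing) (V := R_NormedModule) a t).
- intros t Ht. replace (trunc_sol H a t) with a by lra. rewrite clamp_id by exact Ha.
  specialize (V_osc t). apply Rabs_le_between in V_osc. lra.
Qed.

(* Meaningful only for |a| <= M, where trunc_H_spec shows the predicate is inhabited. *)
Definition trunc_H a := epsilon (inhabits 0) (fun H => trunc_sol H a 1 = a).

Lemma trunc_H_spec a : Rabs a <= M -> trunc_sol (trunc_H a) a 1 = a.
Proof.
intros Ha. unfold trunc_H. apply epsilon_spec.
assert (HVb : 0 <= Vb) by (specialize (V_osc 0); pose proof (Rabs_pos (V 0 - V 0)); lra).
destruct (Ranalysis5.IVT_interv (fun H => trunc_sol H a 1 - a)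
  (G a + V 0 - Vb - 1) (G a + V 0 + Vb + 1)) as [H [_ HH]].
- intros H _. apply continuity_pt_filterlim.
  apply (continuous_minus (fun H' => trunc_sol H' a 1) (fun _ => a));
    [apply trunc_sol_continuous_H; lra | apply continuous_const].
- lra.
- pose proof (trunc_sol_lt_start (G a + V 0 - Vb - 1) a Ha ltac:(lra)). lra.
- pose proof (trunc_sol_gt_start (G a + V 0 + Vb + 1) a Ha ltac:(lra)). lra.
- exists H. lra.
Qed.

Lemma trunc_H_le a : Rabs a <= M -> trunc_H a <= G a + V 0 + Vb.
Proof.
intros Ha. destruct (Rle_or_lt (trunc_H a) (G a + V 0 + Vb)) as [|Hgt]; [assumption|].
pose proof (trunc_sol_gt_start _ a Ha Hgt). rewrite trunc_H_spec in * by exact Ha. lra.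
Qed.

Lemma trunc_H_continuous a : Rabs a < M -> continuous trunc_H a.
Proof.
intros Ha.
assert (Hnear : forall b, Rabs (b - a) < M - Rabs a -> Rabs b <= M).
{ intros b Hb. replace b with (a + (b - a)) by ring.
  pose proof (Rabs_triang a (b - a)). lra. }
apply (continuous_monotone_root (fun H b => trunc_sol H b 1 - b) trunc_H a (M - Rabs a));
  [lra | | |].
- intros b Hb. rewrite trunc_H_spec by (apply Hnear, Hb). ring.
- intros b H H' _ HH. pose proof (trunc_sol_lt_H H H' b 1 HH ltac:(lra)). lra.
- intro H. apply (continuous_minus (fun b => trunc_sol H b 1) (fun b => b));
    [apply trunc_sol_continuous_init; lra | apply continuous_id].
Qed.

Lemma trunc_sol_periodic H a : trunc_sol H a 1 = a -> periodic1 (trunc_sol H a).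
Proof.
intros H1 x. symmetry.
apply (ode_solutions_eq (trunc_sol H a) (fun t => trunc_sol H a (t + 1))
  (fun t => H - V t - G (clamp M (trunc_sol H a t)))
  (fun t => H - V t - G (clamp M (trunc_sol H a (t + 1)))) LG 0);
  [apply trunc_sol_derive | | lra | |].
- intro t. rewrite <- (V_per t).
  replace (H - V (t + 1) - G (clamp M (trunc_sol H a (t + 1))))
    with (scal 1 (H - V (t + 1) - G (clamp M (trunc_sol H a (t + 1)))))
    by (unfold scal; simpl; unfold mult; simpl; ring).
  apply (is_derive_comp (trunc_sol H a) (fun s => s + 1)); [apply trunc_sol_derive|].
  auto_derive; [exact I | ring].
- intro t.
  replace (H - V t - G (clamp M (trunc_sol H a t))
           - (H - V t - G (clamp M (trunc_sol H a (t + 1)))))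
    with (G (clamp M (trunc_sol H a (t + 1))) - G (clamp M (trunc_sol H a t))) by ring.
  rewrite (Rabs_minus_sym (trunc_sol H a t)). apply G_clamp_lipschitz.
- rewrite Rplus_0_l, H1, trunc_sol_at0. reflexivity.
Qed.

(* At the extrema of the solution G (clamp M f) = H - V <= G a + 2 Vb < G (+-M), so the
   solution never reaches the region where the clamp is active. *)
Lemma trunc_sol_periodic_cell_sol a : Rabs a <= M ->
  G a + 2 * Vb < G M -> G a + 2 * Vb < G (- M) ->
  periodic_cell_sol G V (trunc_H a) (trunc_sol (trunc_H a) a).
Proof.
intros Ha HGM HGm. set (H := trunc_H a). set (f := trunc_sol H a).
assert (Hclamped : periodic_cell_sol (fun p => G (clamp M p)) V H f)
  by (split; [apply trunc_sol_derive | apply trunc_sol_periodic, trunc_H_spec, Ha]).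
destruct (periodic_cell_sol_extrema _ _ H f Hclamped) as [xm [xM [Hb [Em EM]]]].
assert (HH : H <= G a + V 0 + Vb) by apply trunc_H_le, Ha.
assert (Hosc := fun x => proj1 (Rabs_le_between _ _) (V_osc x)).
assert (HfM : f xM <= M).
{ destruct (Rle_or_lt (f xM) M) as [|Hgt]; [assumption | exfalso].
  rewrite clamp_above in EM by lra. specialize (Hosc xM). lra. }
assert (Hfm : - M <= f xm).
{ destruct (Rle_or_lt (- M) (f xm)) as [|Hlt]; [assumption | exfalso].
  rewrite clamp_below in Em by lra. specialize (Hosc xm). lra. }
split; [|apply Hclamped]. intro x.
rewrite <- (clamp_id M (f x)); [apply trunc_sol_derive|].
specialize (Hb x). apply Rabs_le. lra.
Qed.

Lemma trunc_sol_mean_continuous a : Rabs a < M ->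
  continuous (fun b => RInt (trunc_sol (trunc_H b) b) 0 1) a.
Proof.
intros Ha. apply (RInt_param_continuous (fun b => trunc_sol (trunc_H b) b));
  [intros; apply trunc_sol_continuous|].
intros eps Heps. destruct (trunc_sol_close eps Heps) as [del [Hdel Hclose]].
destruct (proj1 (continuous_epsilon_delta trunc_H a) (trunc_H_continuous a Ha) del Hdel)
  as [del' [Hdel' HH]].
exists (Rmin del del'). split; [apply Rmin_glb_lt; lra|]. intros b x Hb Hx.
apply Hclose; [exact Hx | apply HH |];
  eapply Rlt_le_trans; [apply Hb | apply Rmin_r | apply Hb | apply Rmin_l].
Qed.

End Shooting.

(** * Existence with prescribed mean *)

Lemma coercive_large G : coercive G -> forall K, exists N, forall p, N <= Rabs p -> K < G p.
Proof.
intros [Hp Hm] K.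
destruct (Hp (fun y => K < y) (ex_intro _ K (fun x Hx => Hx))) as [N1 HN1].
destruct (Hm (fun y => K < y) (ex_intro _ K (fun x Hx => Hx))) as [N2 HN2].
exists (Rmax N1 (- N2) + 1). intros p Hpn.
pose proof (Rmax_l N1 (- N2)). pose proof (Rmax_r N1 (- N2)).
destruct (Rle_or_lt 0 p).
- rewrite Rabs_pos_eq in Hpn by lra. apply HN1. lra.
- rewrite Rabs_left in Hpn by lra. apply HN2. lra.
Qed.

Lemma truncation_exists G Vb A1 A2 : is_C1 G -> coercive G -> A1 <= A2 ->
  exists M LG, 0 < M /\ 0 <= LG /\
    (forall p q, Rabs p <= M -> Rabs q <= M -> Rabs (G p - G q) <= LG * Rabs (p - q)) /\
    Rabs A1 < M /\ Rabs A2 < M /\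
    forall a, A1 <= a <= A2 -> G a + 2 * Vb < G M /\ G a + 2 * Vb < G (- M).
Proof.
intros HG HC HA.
assert (Hloc := C1_locally_lipschitz G HG).
destruct (continuity_ab_maj G A1 A2 HA) as [c [Hc _]].
{ intros p _. apply continuity_pt_filterlim, locally_lipschitz_continuous, Hloc. }
destruct (coercive_large G HC (G c + 2 * Vb)) as [N HN].
set (M := Rmax N (Rmax (Rabs A1 + 1) (Rabs A2 + 1))).
assert (HM : N <= M /\ Rabs A1 + 1 <= M /\ Rabs A2 + 1 <= M).
{ pose proof (Rmax_l N (Rmax (Rabs A1 + 1) (Rabs A2 + 1))).
  pose proof (Rmax_r N (Rmax (Rabs A1 + 1) (Rabs A2 + 1))).
  pose proof (Rmax_l (Rabs A1 + 1) (Rabs A2 + 1)). pose proof (Rmax_r (Rabs A1 + 1) (Rabs A2 + 1)).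
  unfold M. lra. }
assert (HM0 : 0 < M) by (pose proof (Rabs_pos A1); lra).
destruct (Hloc M) as [LG [HLG HLip]].
exists M, LG. do 5 (split; [assumption || lra|]). intros a' Ha'. specialize (Hc a' Ha').
split.
- assert (G c + 2 * Vb < G M) by (apply HN; rewrite Rabs_pos_eq; lra). lra.
- assert (G c + 2 * Vb < G (- M)) by (apply HN; rewrite Rabs_Ropp, Rabs_pos_eq; lra). lra.
Qed.

Lemma periodic_cell_sol_exists G V a : is_C1 G -> coercive G ->
  (forall x, continuous V x) -> periodic1 V ->
  exists H f, periodic_cell_sol G V H f /\ f 0 = a.
Proof.
intros HG HC HV HVp.
destruct (periodic1_oscillation_bounded V HVp HV) as [Vb HVb].
destruct (truncation_exists G Vb a a HG HC (Rle_refl a))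
  as [M [LG [HM [HLG [HLip [Ha [_ HGM]]]]]]].
exists (trunc_H G V M a), (trunc_sol G V M (trunc_H G V M a) a). split; [|apply trunc_sol_at0].
destruct (HGM a (conj (Rle_refl a) (Rle_refl a))).
apply (trunc_sol_periodic_cell_sol G V M LG Vb); auto. lra.
Qed.

Lemma periodic_cell_sol_reflect G V H f : periodic_cell_sol G V H f ->
  periodic_cell_sol (fun p => G (- p)) (fun x => V (- x)) H (fun x => - f (- x)).
Proof.
intros [Hd Hp]. split.
- intro x. rewrite Ropp_involutive.
  replace (H - V (- x) - G (f (- x))) with (- - (H - V (- x) - G (f (- x)))) by ring.
  apply (is_derive_opp (fun s => f (- s))), is_derive_reflect, Hd.
- intro x. rewrite <- (Hp (- (x + 1))). f_equal. f_equal. ring.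
Qed.

(* A solution starting high lies above a fixed solution f0 and has a large maximum; as G
   varies by at most 2 Vb between the maximum and the minimum of a solution, coercivity
   pushes the minimum above theta. *)
Lemma periodic_cell_sol_large_start G V Vb H0 f0 theta :
  locally_lipschitz G -> (forall K, exists N, forall p, N <= p -> K < G p) ->
  (forall x, Rabs (V x - V 0) <= Vb) -> periodic_cell_sol G V H0 f0 ->
  exists A, forall H f, periodic_cell_sol G V H f -> A <= f 0 -> forall x, theta < f x.
Proof.
intros Hloc Hlarge HVb Hf0.
destruct (periodic_cell_sol_extrema G V H0 f0 Hf0) as [xm0 [xM0 [Hb0 _]]].
set (th := Rmax theta (f0 xm0)).
destruct (continuity_ab_maj G (f0 xm0) th) as [pM [HpM _]]; [apply Rmax_r | |].
{ intros p _. apply continuity_pt_filterlim, locally_lipschitz_continuous, Hloc. }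
destruct (Hlarge (G pM + 2 * Vb)) as [N HN].
exists (Rmax N (f0 0 + 1)). intros H f Hf Hstart x.
pose proof (Rmax_l N (f0 0 + 1)). pose proof (Rmax_r N (f0 0 + 1)).
assert (Habove := periodic_cell_sol_lt G V Hloc H0 H f0 f Hf0 Hf ltac:(lra)).
destruct (periodic_cell_sol_extrema G V H f Hf) as [xm [xM [Hb [Em EM]]]].
assert (HGM : G pM + 2 * Vb < G (f xM)) by (apply HN; specialize (Hb 0); lra).
assert (Hosc : V xm - V xM <= 2 * Vb)
  by (pose proof (proj1 (Rabs_le_between _ _) (HVb xM));
      pose proof (proj1 (Rabs_le_between _ _) (HVb xm)); lra).
assert (Hth : th < f xm).
{ destruct (Rlt_or_le th (f xm)) as [|Hle]; [assumption | exfalso].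
  assert (G (f xm) <= G pM) by (apply HpM; specialize (Habove xm); specialize (Hb0 xm); lra).
  lra. }
assert (theta <= th) by apply Rmax_l. specialize (Hb x). lra.
Qed.

Lemma periodic_cell_sol_start_bounds G V Vb H0 f0 theta :
  locally_lipschitz G -> coercive G -> (forall x, Rabs (V x - V 0) <= Vb) ->
  periodic_cell_sol G V H0 f0 ->
  exists A1 A2, A1 < A2 /\
    (forall H f, periodic_cell_sol G V H f -> f 0 <= A1 -> forall x, f x < theta) /\
    (forall H f, periodic_cell_sol G V H f -> A2 <= f 0 -> forall x, theta < f x).
Proof.
intros Hloc HC HVb Hf0.
assert (Hlarge : forall K, exists N, forall p, N <= p -> K < G p).
{ intro K. destruct (coercive_large G HC K) as [N HN].
  exists N. intros p Hp. apply HN. pose proof (Rle_abs p). lra. }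
assert (Hlarge_refl : forall K, exists N, forall p, N <= p -> K < G (- p)).
{ intro K. destruct (coercive_large G HC K) as [N HN].
  exists N. intros p Hp. apply HN. rewrite Rabs_Ropp. pose proof (Rle_abs p). lra. }
assert (Hloc_refl : locally_lipschitz (fun p => G (- p))).
{ intro r. destruct (Hloc r) as [LG [HLG HLip]]. exists LG. split; [exact HLG|].
  intros p q Hp Hq. replace (p - q) with (- (- p - - q)) by ring. rewrite Rabs_Ropp.
  apply HLip; rewrite Rabs_Ropp; assumption. }
assert (HVb_refl : forall x, Rabs (V (- x) - V (- 0)) <= Vb)
  by (intro x; rewrite Ropp_0; apply HVb).
destruct (periodic_cell_sol_large_start G V Vb H0 f0 theta Hloc Hlarge HVb Hf0) as [A2 HA2].
(* The lower bound is the upper bound for the reflected problem. *)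
destruct (periodic_cell_sol_large_start _ _ Vb H0 _ (- theta) Hloc_refl Hlarge_refl HVb_refl
  (periodic_cell_sol_reflect _ _ _ _ Hf0)) as [B1 HB1].
assert (HB1A := Rmin_l (- B1) (A2 - 1)). assert (HA2A := Rmin_r (- B1) (A2 - 1)).
exists (Rmin (- B1) (A2 - 1)), A2. split; [lra | split; [|exact HA2]].
intros H f Hf Hstart x.
assert (Hrefl := HB1 _ _ (periodic_cell_sol_reflect _ _ _ _ Hf)). cbv beta in Hrefl.
rewrite Ropp_0 in Hrefl. specialize (Hrefl ltac:(lra) (- x)).
rewrite Ropp_involutive in Hrefl. lra.
Qed.

Lemma periodic_cell_sol_exists_mean G V theta : is_C1 G -> coercive G ->
  (forall x, continuous V x) -> periodic1 V ->
  exists H f, periodic_cell_sol G V H f /\ RInt f 0 1 = theta.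
Proof.
intros HG HC HV HVp.
destruct (periodic1_oscillation_bounded V HVp HV) as [Vb HVb].
destruct (periodic_cell_sol_exists G V 0 HG HC HV HVp) as [H0 [f0 [Hf0 _]]].
destruct (periodic_cell_sol_start_bounds G V Vb H0 f0 theta (C1_locally_lipschitz G HG) HC HVb Hf0)
  as [A1 [A2 [HA12 [HA1 HA2]]]].
destruct (truncation_exists G Vb A1 A2 HG HC (Rlt_le _ _ HA12))
  as [M [LG [HM [HLG [HLip [HA1M [HA2M HGM]]]]]]].
assert (Hin : forall a, A1 <= a <= A2 -> Rabs a < M)
  by (intros a Ha; apply Rabs_def1; pose proof (Rle_abs A2); pose proof (Rle_abs (- A1));
      rewrite Rabs_Ropp in *; lra).
set (f a := trunc_sol G V M (trunc_H G V M a) a).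
assert (Hsol : forall a, A1 <= a <= A2 -> periodic_cell_sol G V (trunc_H G V M a) (f a)).
{ intros a Ha. destruct (HGM a Ha).
  apply (trunc_sol_periodic_cell_sol G V M LG Vb); auto. apply Rlt_le, Hin, Ha. }
assert (Hfc : forall a x, continuous (f a) x)
  by (intros a x; exact (trunc_sol_continuous G V M LG Vb HM HLG HLip HV HVb _ _ x)).
assert (Hlow : RInt (f A1) 0 1 < theta).
{ apply RInt_unit_lt; [apply Hfc|]. apply (HA1 _ _ (Hsol A1 ltac:(lra))).
  unfold f. rewrite trunc_sol_at0. lra. }
assert (Hhigh : theta < RInt (f A2) 0 1).
{ apply RInt_unit_gt; [apply Hfc|]. apply (HA2 _ _ (Hsol A2 ltac:(lra))).
  unfold f. rewrite trunc_sol_at0. lra. }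
destruct (Ranalysis5.IVT_interv (fun a => RInt (f a) 0 1 - theta) A1 A2) as [a [Ha Hmean]];
  [| exact HA12 | lra | lra |].
- intros a Ha. apply continuity_pt_filterlim.
  apply (continuous_minus (fun b => RInt (f b) 0 1) (fun _ => theta)); [|apply continuous_const].
  apply (trunc_sol_mean_continuous G V M LG Vb HM HLG HLip HV HVb), Hin, Ha.
- exists (trunc_H G V M a), (f a). split; [apply Hsol, Ha | lra].
Qed.

Lemma cell_solution_periodic G V theta H f :
  cell_solution G V theta H f -> periodic_cell_sol G V H f /\ RInt f 0 1 = theta.
Proof.
intros [[Hd _] [Hp [Hmean Heq]]]. split; [split|]; auto.
intro x. replace (H - V x - G (f x)) with (Derive f x) by (specialize (Heq x); lra).
apply Derive_correct, Hd.
Qed.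

Lemma periodic_cell_sol_cell_solution G V H f :
  (forall p, continuous G p) -> (forall x, continuous V x) ->
  periodic_cell_sol G V H f -> cell_solution G V (RInt f 0 1) H f.
Proof.
intros HG HV Hf.
assert (Hc := periodic_cell_sol_continuous G V H f Hf). destruct Hf as [Hd Hp].
assert (HD : forall x, Derive f x = H - V x - G (f x)) by (intro x; apply is_derive_unique, Hd).
split; [split|split; [exact Hp | split; [reflexivity|]]].
- intro x. eexists. apply Hd.
- intro x. apply (continuous_ext (fun x => H - V x - G (f x))); [intro t; symmetry; apply HD|].
  apply (continuous_minus (fun x => H - V x) (fun x => G (f x))).
  + apply (continuous_minus (fun _ => H) V); [apply continuous_const | apply HV].
  + apply (continuous_comp f G); [apply Hc | apply HG].
- intro x. rewrite HD. ring.
Qed.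

Theorem lemma4p1 (G V : R -> R) :
  is_C1 G -> coercive G -> lipschitz V -> periodic1 V ->
  forall theta : R,
    exists (Hbar : R) (f : R -> R),
      cell_solution G V theta Hbar f /\
      (forall (H' : R) (g : R -> R), cell_solution G V theta H' g ->
         H' = Hbar /\ g = f).
Proof.
intros HG HC [LV HLV] HVp theta.
assert (HV := lipschitz_continuous V LV HLV).
assert (Hloc := C1_locally_lipschitz G HG).
destruct (periodic_cell_sol_exists_mean G V theta HG HC HV HVp) as [H [f [Hf Hmean]]].
exists H, f. split.
- rewrite <- Hmean. apply periodic_cell_sol_cell_solution; auto.
  apply locally_lipschitz_continuous, Hloc.
- intros H' g Hg. apply cell_solution_periodic in Hg. destruct Hg as [Hg Hgmean].
  apply (periodic_cell_sol_unique_mean G V Hloc); [exact Hg | exact Hf | lra].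
Qed.
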